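(* Let $k$ be a positive integer and $L=\{\ell_1,\ldots,\ell_s\}\subset[0,k-1]$ with $\ell_1<\cdots<\ell_s$; suppose $L$ contains $b$ full runs of consecutive integers with lengths $m_1,\ldots,m_b$. For integers $n>k$, $0\le u\le k$ and $0\le i\le k$ let \[P_i^u=\sum_{j=0}^{i}(-1)^j\binom{u}{j}\binom{k-u}{i-j}\binom{n-k-u}{i-j},\] and let $P$ be the $s\times s$ matrix with $(i,j)$-entry $P_{k-\ell_j}^{\ell_i+1}$. Then, as $n\to\infty$ (with $k,L$ fixed), \[\det(P)=(-1)^sC\,n^{sk-(\ell_1+\cdots+\ell_s)-s}+O\!\left(n^{sk-(\ell_1+\cdots+\ell_s)-s-1}\right),\qquad C=\frac{\prod_{i=1}^s(\ell_i+1)}{\prod_{i=1}^b m_i!\,\prod_{i=1}^s(k-\ell_i-1)!}.\] In particular, $P$ is invertible for all sufficiently large $n$.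
   Context: $[a,b]=\{a,\ldots,b\}$. For $L=\{\ell_1<\cdots<\ell_s\}$, a subset $\{\ell_m,\ldots,\ell_{m+p}\}$ is a run if $\ell_{m+i}=\ell_m+i$ for $0\le i\le p$; it is a full run if moreover ($m=1$ or $\ell_{m-1}<\ell_m-1$) and ($m+p=s$ or $\ell_{m+p+1}>\ell_{m+p}+1$). The length of a run is its cardinality. Binomial coefficients $\binom{a}{c}$ are $0$ when $c<0$ or $c>a\ge0$. *)

From mathcomp Require Import all_boot all_order all_algebra.
Set Implicit Arguments. Unset Strict Implicit. Unset Printing Implicit Defensive.
Import Order.TTheory GRing.Theory Num.Theory.
Local Open Scope ring_scope.

(* Generalized binomial coefficient with integer top and natural bottom:
   binom(a, c) = a (a-1) ... (a-c+1) / c!. *)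
Definition gbin (a : int) (c : nat) : rat :=
  match a with
  | Posz m => ('C(m, c))%:R
  | Negz m => (-1) ^+ c * ('C(m + c, c))%:R
  end.

Definition Pcoef (k n u i : nat) : rat :=
  \sum_(j < i.+1)
     (-1) ^+ j * ('C(u, j))%:R * ('C(k - u, i - j))%:R
       * gbin (n%:Z - k%:Z - u%:Z) (i - j).

Definition Pmat (k n : nat) (L : seq nat) : 'M[rat]_(size L) :=
  \matrix_(i < size L, j < size L)
     Pcoef k n (nth 0%N L i).+1 (k - nth 0%N L j)%N.

Definition is_full_run (L : seq nat) (m p : nat) : bool :=
  [&& (m + p < size L)%N,
      [forall i : 'I_p.+1, nth 0%N L (m + i) == (nth 0%N L m + i)%N],
      (m == 0%N) || (nth 0%N L m.-1 + 1 < nth 0%N L m)%N &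
      (m + p == (size L).-1)%N || (nth 0%N L (m + p) + 1 < nth 0%N L (m + p).+1)%N].

Definition runs_fact_prod (L : seq nat) : nat :=
  \prod_(m < size L) \prod_(p < size L | is_full_run L m p) (p.+1)`!.

Definition Cconst (k : nat) (L : seq nat) : rat :=
  (\prod_(l <- L) (l.+1)%:R) /
  ((runs_fact_prod L)%:R * \prod_(l <- L) ((k - l.+1)`!)%:R).

Definition Pexp (k : nat) (L : seq nat) : int :=
  (size L * k)%:Z - (\sum_(l <- L) l)%:Z - (size L)%:Z.

(* Each entry P_i^u is a polynomial in n of degree at most k - u, so det P is a
   polynomial in n of degree at most e = sum_j (k - l_j - 1) = Pexp k L, and its
   n^e coefficient is the determinant of the matrix of top coefficients.  That
   matrix is [C(l_i + 1, l_j)] scaled by (-1)^(l_i + 1) / (k - l_i - 1)! on rows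
   and by (-1)^(l_j) on columns.  As C(l_i + 1, l_j) = 0 once l_j > l_i + 1, the
   binomial matrix is block lower triangular along the full runs of L.  The block
   of a run l, ..., l + m - 1 is diag((l + a + 1)! / (a + 1)!) [C(a + 1, b)]
   diag(b! / (l + b)!), and [C(a + 1, b)] = [C(a, c)] [c = b or c + 1 = b] has
   determinant 1, so the block has determinant prod_a (l + a + 1) / m!.  Hence
   the top coefficient is (-1)^s C <> 0, which gives both the asymptotics and the
   invertibility of P for large n. *)

From mathcomp Require Import all_boot all_order all_algebra.
From mathcomp Require Import perm zify ring.
Import Order.TTheory GRing.Theory Num.Theory.
Set Implicit Arguments. Unset Strict Implicit. Unset Printing Implicit Defensive.
Local Open Scope ring_scope.

Section RowDegreeBounds.
Variable R : comNzRingType.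

Lemma coefM_size_bound (p q : {poly R}) dp dq :
  (size p <= dp.+1)%N -> (size q <= dq.+1)%N -> (p * q)`_(dp + dq) = p`_dp * q`_dq.
Proof.
move=> sp sq; have ltd : (dp < (dp + dq).+1)%N by rewrite ltnS leq_addr.
rewrite coefM (bigD1 (Ordinal ltd)) //= addKn big1 ?addr0 // => j /eqP neq_j.
have [ltj|gtj|eqj] := ltngtP j dp.
- by rewrite (nth_default _ (leq_trans sq _)) ?mulr0 //; lia.
- by rewrite (nth_default _ (leq_trans sp gtj)) mul0r.
- by case: neq_j; apply: val_inj.
Qed.

Lemma size_prod_bound (I : Type) (r : seq I) (F : I -> {poly R}) (d : I -> nat) :
  (forall i, size (F i) <= (d i).+1)%N ->
  (size (\prod_(i <- r) F i)%R <= (\sum_(i <- r) d i).+1)%N.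
Proof.
move=> sF; elim: r => [|i r IHr]; first by rewrite !big_nil size_poly1.
rewrite !big_cons (leq_trans (size_polyMleq _ _)) //.
by have := sF i; lia.
Qed.

Lemma coef_prod_bound (I : Type) (r : seq I) (F : I -> {poly R}) (d : I -> nat) :
  (forall i, size (F i) <= (d i).+1)%N ->
  (\prod_(i <- r) F i)`_(\sum_(i <- r) d i) = \prod_(i <- r) (F i)`_(d i).
Proof.
move=> sF; elim: r => [|i r IHr]; first by rewrite !big_nil coef1.
by rewrite !big_cons coefM_size_bound ?IHr ?size_prod_bound.
Qed.

Lemma size_det_row_bound n (Q : 'M[{poly R}]_n) (d : 'I_n -> nat) :
  (forall i j, size (Q i j) <= (d i).+1)%N -> (size (\det Q)%R <= (\sum_i d i).+1)%N.
Proof.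
move=> sQ; apply/leq_sizeP => t lt_t; rewrite coef_sum big1 // => s _.
rewrite -(rmorph_sign polyC) coefCM nth_default ?mulr0 //.
exact: leq_trans (size_prod_bound _ (fun i => sQ i (s i))) lt_t.
Qed.

Lemma coef_det_row_bound n (Q : 'M[{poly R}]_n) (d : 'I_n -> nat) :
  (forall i j, size (Q i j) <= (d i).+1)%N ->
  (\det Q)`_(\sum_i d i) = \det (\matrix_(i, j) (Q i j)`_(d i)).
Proof.
move=> sQ; rewrite coef_sum; apply: eq_bigr => s _.
rewrite -!(rmorph_sign polyC) coefCM (coef_prod_bound _ (fun i => sQ i (s i))).
by congr (_ * _); apply: eq_bigr => i _; rewrite mxE.
Qed.

End RowDegreeBounds.

Lemma horner_sub_top_bound (R : realFieldType) (p : {poly R}) e x :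
  (size p <= e.+1)%N -> 1 <= x ->
  `|p.[x] - p`_e * x ^+ e| <= (\sum_(i < e) `|p`_i|) * x ^ (e%:Z - 1).
Proof.
move=> sp x_ge1; rewrite (horner_coef_wide x sp) big_ord_recr /= addrK.
case: e {sp} => [|e]; first by rewrite !big_ord0 normr0 mul0r.
have -> : e.+1%:Z - 1 = e by rewrite -addn1 PoszD addrK.
rewrite mulr_suml (le_trans (ler_norm_sum _ _ _)) //.
apply: ler_sum => i _; rewrite normrM normrX (ger0_norm (le_trans ler01 x_ge1)).
by rewrite ler_wpM2l // ler_weXn2l // -ltnS.
Qed.

Lemma eventually_neq0_of_approx (R : archiRealFieldType) (f : nat -> R) (c M : R)
    (e : int) N :
  c != 0 ->
  (forall n, (N <= n)%N -> `|f n - c * n%:R ^ e| <= M * n%:R ^ (e - 1)) ->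
  exists N', forall n, (N' <= n)%N -> f n != 0.
Proof.
move=> c_neq0 approx; have c_gt0 : 0 < `|c| by rewrite normr_gt0.
have M_ge0 : 0 <= M.
  have := approx (maxn N 1) (leq_maxl _ _).
  have pos : 0 < (maxn N 1)%:R ^ (e - 1) :> R by rewrite exprz_gt0 // ltr0n; lia.
  by move=> /(le_trans (normr_ge0 _)); rewrite pmulr_lge0.
exists (maxn N (Num.bound (M / `|c|)).+1) => n; rewrite geq_max => /andP[leNn ltn].
apply/eqP => fn0; have := approx n leNn; rewrite fn0 sub0r normrN normrM.
have n_gt0 : 0 < n%:R :> R by rewrite ltr0n; lia.
have pow_gt0 : 0 < n%:R ^ (e - 1) :> R by rewrite exprz_gt0.
have -> : n%:R ^ e = n%:R ^ (e - 1) * n%:R :> R.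
  by rewrite -[X in _ = _ * X]expr1z -exprzDr ?unitfE ?lt0r_neq0 // subrK.
rewrite normrM (gtr0_norm n_gt0) (gtr0_norm pow_gt0) mulrCA mulrC.
rewrite ler_pM2r // mulrC -ler_pdivlMr // => le_n.
have le_bound : (Num.bound (M / `|c|))%:R <= n%:R :> R by rewrite ler_nat ltnW.
have := archi_boundP (divr_ge0 M_ge0 (ltW c_gt0)).
by rewrite ltNge (le_trans le_bound le_n).
Qed.

Lemma natr_fact_neq0 (R : numDomainType) n : n`!%:R != 0 :> R.
Proof. by rewrite pnatr_eq0 -lt0n fact_gt0. Qed.

Lemma gbinS (a : int) c : gbin a c.+1 * c.+1%:R = gbin a c * (a%:~R - c%:R).
Proof.
case: a => m /=.
  have [le_cm|lt_mc] := leqP c m; last by rewrite !bin_small ?mul0r //; lia.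
  by rewrite -natrB // -!natrM mulnC mul_bin_left mulnC.
have -> : (Negz m)%:~R - c%:R = - (m + c.+1)%:R :> rat.
  by rewrite NegzE rmorphN /= -opprD -natrD addnS.
have pascal : (m + c.+1)%:R * 'C(m + c, c)%:R = c.+1%:R * 'C(m + c.+1, c.+1)%:R :> rat.
  by rewrite -!natrM -mul_bin_diag addnS.
by rewrite -mulrA (mulrC _ c.+1%:R) -pascal exprS; ring.
Qed.

Lemma gbin_mul_fact (a : int) c : gbin a c * c`!%:R = \prod_(t < c) (a%:~R - t%:R).
Proof.
elim: c => [|c IHc]; first by case: a => m; rewrite /= ?bin0 ?expr0 mul1r big_ord0.
by rewrite big_ord_recr -IHc factS natrM mulrA gbinS /=; ring.
Qed.

Definition binom_poly (x0 c : nat) : {poly rat} :=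
  (c`!%:R)^-1 *: \prod_(t < c) ('X - (x0 + t)%:R%:P).

Lemma horner_binom_poly x0 c n : (binom_poly x0 c).[n%:R] = gbin (n%:Z - x0%:Z) c.
Proof.
apply: (mulIf (natr_fact_neq0 _ c)); rewrite gbin_mul_fact hornerZ horner_prod mulrAC.
rewrite mulVf ?natr_fact_neq0 // mul1r; apply: eq_bigr => t _.
by rewrite hornerXsubC rmorphB /= natrD opprD addrA.
Qed.

Lemma size_binom_poly x0 c : size (binom_poly x0 c) = c.+1.
Proof.
by rewrite size_scale ?invr_eq0 ?natr_fact_neq0 // -big_enum size_prod_XsubC size_enum_ord.
Qed.

Lemma coef_binom_poly_top x0 c : (binom_poly x0 c)`_c = (c`!%:R)^-1.
Proof.
have := lead_coef_prod_XsubC (enum 'I_c) xpredT (fun t : 'I_c => (x0 + t)%:R : rat).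
rewrite /lead_coef size_prod_XsubC size_enum_ord big_enum /= => top.
by rewrite coefZ top mulr1.
Qed.

Definition Ppoly (k u i : nat) : {poly rat} :=
  \sum_(j < i.+1)
     ((-1) ^+ j * 'C(u, j)%:R * 'C(k - u, i - j)%:R) *: binom_poly (k + u) (i - j).

Lemma horner_Ppoly k u i n : (Ppoly k u i).[n%:R] = Pcoef k n u i.
Proof.
rewrite horner_sum; apply: eq_bigr => j _.
by rewrite hornerZ horner_binom_poly PoszD opprD addrA.
Qed.

Lemma size_Ppoly k u i : (size (Ppoly k u i) <= (k - u).+1)%N.
Proof.
apply/leq_sizeP => t lt_t; rewrite coef_sum big1 // => j _; rewrite coefZ.
have [le_ij|lt_ij] := leqP (i - j) (k - u); last by rewrite (bin_small lt_ij) mulr0 mul0r.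
by rewrite nth_default ?mulr0 // size_binom_poly (leq_trans _ lt_t).
Qed.

Lemma coef_Ppoly_top k u y : (u <= k)%N -> (y <= k)%N ->
  (Ppoly k u (k - y))`_(k - u) = (-1) ^+ (u + y) * 'C(u, y)%:R / (k - u)`!%:R.
Proof.
move=> le_uk le_yk; rewrite coef_sum.
have [lt_uy|le_yu] := ltnP u y.
  rewrite bin_small // mulr0 mul0r big1 // => j _.
  by rewrite coefZ nth_default ?mulr0 // size_binom_poly; lia.
have lt_j0 : (u - y < (k - y).+1)%N by lia.
rewrite (bigD1 (Ordinal lt_j0)) //= big1 ?addr0 => [|j /eqP neq_j]; last first.
  rewrite coefZ; have [lt|gt|eq] := ltngtP (k - y - j) (k - u).
  - by rewrite nth_default ?mulr0 // size_binom_poly.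
  - by rewrite (bin_small gt) mulr0 mul0r.
  - by case: neq_j; apply: val_inj => /=; have := ltn_ord j; lia.
have -> : (k - y - (u - y) = k - u)%N by lia.
rewrite coefZ coef_binom_poly_top binn bin_sub // mulr1.
have -> : (u + y = u - y + 2 * y)%N by lia.
by rewrite exprD exprM sqrrN !expr1n mulr1.
Qed.

Lemma sum_ord_mul_natr_eq (R : pzSemiRingType) m (F : nat -> R) x : (x < m)%N ->
  \sum_(c < m) F c * (c == x :> nat)%:R = F x.
Proof.
move=> lt_xm; rewrite (bigD1 (Ordinal lt_xm)) //= eqxx mulr1 big1 ?addr0 // => c neq_c.
rewrite (_ : (c == x :> nat) = false) ?mulr0 //.
by apply: contraNF neq_c => /eqP eq_cx; apply/eqP/val_inj.
Qed.

Lemma bin_succ_mx_factor (R : pzSemiRingType) m :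
  \matrix_(a < m, b < m) 'C(a.+1, b)%:R =
  \matrix_(a < m, c < m) 'C(a, c)%:R *m
  \matrix_(c < m, b < m) ((c == b :> nat) + (c.+1 == b)%N)%:R :> 'M[R]_m.
Proof.
apply/matrixP => a b; rewrite !mxE; under eq_bigr do rewrite !mxE natrD mulrDr.
rewrite big_split /= (sum_ord_mul_natr_eq (fun c => 'C(a, c)%:R)) //.
case: b => [[|b] lt_bm] /=; first by rewrite big1 ?addr0 ?bin0 // => c _; rewrite mulr0.
under eq_bigr do rewrite eqSS.
by rewrite (sum_ord_mul_natr_eq (fun c => 'C(a, c)%:R)) 1?ltnW // binS natrD.
Qed.

Lemma det_bin_succ (R : comNzRingType) m :
  \det (\matrix_(a < m, b < m) 'C(a.+1, b)%:R : 'M[R]_m) = 1.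
Proof.
rewrite bin_succ_mx_factor det_mulmx det_trig; last first.
  by apply/is_trig_mxP => a c lt_ac; rewrite mxE bin_small.
rewrite -det_tr det_trig; last first.
  by apply/is_trig_mxP => c b lt_cb; rewrite !mxE gtn_eqF // gtn_eqF // leqW.
by rewrite !big1 ?mulr1 // => c _; rewrite !mxE ?binn // eqxx gtn_eqF.
Qed.

Lemma natr_bin_shift (R : pzSemiRingType) l a b :
  'C(l + a.+1, l + b)%:R * (l + b)`!%:R * a.+1`!%:R
  = (l + a.+1)`!%:R * b`!%:R * 'C(a.+1, b)%:R :> R.
Proof.
rewrite -!natrM; congr _%:R.
have [le_ba|lt_ab] := leqP b a.+1; last by rewrite !bin_small ?muln0 ?mul0n //; lia.
apply/eqP; rewrite -(eqn_pmul2r (fact_gt0 (a.+1 - b))); apply/eqP.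
have := bin_fact (_ : l + b <= l + a.+1)%N; rewrite subnDl leq_add2l => /(_ le_ba) <-.
by rewrite -(bin_fact le_ba); ring.
Qed.

Lemma natr_fact_prod (R : pzSemiRingType) m : m`!%:R = \prod_(a < m) a.+1%:R :> R.
Proof. by rewrite fact_prod big_add1 big_mkord natr_prod. Qed.

Lemma det_bin_run (R : numFieldType) l m :
  \det (\matrix_(a < m, b < m) 'C(l + a.+1, l + b)%:R : 'M[R]_m) * m`!%:R
  = \prod_(x <- iota l m) x.+1%:R.
Proof.
pose r : 'rV[R]_m := \row_a ((l + a.+1)`!%:R / a.+1`!%:R).
pose c : 'rV[R]_m := \row_b (b`!%:R / (l + b)`!%:R).
have -> : \matrix_(a < m, b < m) 'C(l + a.+1, l + b)%:R
    = diag_mx r *m \matrix_(a < m, b < m) 'C(a.+1, b)%:R *m diag_mx c.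
  rewrite mul_diag_mx mul_mx_diag; apply/matrixP => a b; rewrite !mxE.
  apply: (mulIf (natr_fact_neq0 R (l + b))); apply: (mulIf (natr_fact_neq0 R a.+1)).
  by rewrite natr_bin_shift; field; rewrite !natr_fact_neq0.
rewrite -[in RHS](addn0 l) iotaDl big_map -[in RHS](subn0 m) -/(index_iota 0 m) big_mkord.
rewrite !det_mulmx det_bin_succ mulr1 !det_diag -big_split natr_fact_prod -big_split /=.
apply: eq_bigr => a _; rewrite !mxE addnS !factS !natrM.
by field; rewrite !natr_fact_neq0 nat1r pnatr_eq0.
Qed.

Section FirstRun.
Variables (l r : nat) (L2 : seq nat).
Hypothesis r_gt0 : (0 < r)%N.
Hypothesis gap : all (fun y => l + r < y)%N L2.
Let L := iota l r ++ L2.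

Lemma nth_iota_cat_l i : (i < r)%N -> nth 0%N L i = (l + i)%N.
Proof. by move=> lt_ir; rewrite nth_cat size_iota lt_ir nth_iota. Qed.

Lemma nth_iota_cat_r i : nth 0%N L (r + i) = nth 0%N L2 i.
Proof. by rewrite nth_cat size_iota ltnNge leq_addr addKn. Qed.

Lemma gap_nth i : (i < size L2)%N -> (l + r < nth 0%N L2 i)%N.
Proof. exact: all_nthP gap i. Qed.

Lemma is_full_run_iota_cat_l i p : (i < r)%N ->
  is_full_run L i p = (i == 0%N) && (p == r.-1).
Proof.
move=> lt_ir; rewrite /is_full_run size_cat size_iota.
case: i lt_ir => [|i] lt_ir; last first.
  by rewrite (nth_iota_cat_l (ltnW lt_ir)) (nth_iota_cat_l lt_ir) addn1 addnS ltnn !andbF.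
rewrite add0n eqxx /= nth_iota_cat_l //.
have [lt_pr|gt_pr|->] := ltngtP p r.-1.
- by rewrite !nth_iota_cat_l ?andbF //; lia.
- have [lt_psz|] := boolP (p < r + size L2)%N => //=.
  have lt_rp : (r < p.+1)%N by lia.
  case: forallP => // /(_ (Ordinal lt_rp)) /eqP /=.
  rewrite add0n addn0 -[r]addn0 nth_iota_cat_r; have := @gap_nth 0; lia.
rewrite prednK //; apply/and3P; split; first by lia.
  by apply/forallP => j; rewrite add0n addn0 nth_iota_cat_l //; have := ltn_ord j; lia.
have [->|sz_gt0] := posnP (size L2); first by rewrite addn0 eqxx.
have -> : nth 0%N L r = nth 0%N L2 0 by rewrite -nth_iota_cat_r addn0.
rewrite nth_iota_cat_l ?prednK //.
by have := gap_nth sz_gt0; lia.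
Qed.

Lemma is_full_run_iota_cat_r i p : (i < size L2)%N ->
  is_full_run L (r + i) p = is_full_run L2 i p.
Proof.
move=> lt_isz; rewrite /is_full_run size_cat size_iota -addnA ltn_add2l.
congr [&& _, _, _ & _].
- by apply: eq_forallb => j; rewrite -addnA !nth_iota_cat_r.
- case: i lt_isz => [|i] lt_isz.
    rewrite addn0 eqxx /=; apply/orP; right.
    have -> : nth 0%N L r = nth 0%N L2 0 by rewrite -nth_iota_cat_r addn0.
    by rewrite nth_iota_cat_l ?prednK //; have := gap_nth lt_isz; lia.
  have -> : (r + i.+1).-1 = (r + i)%N by rewrite addnS.
  by rewrite !nth_iota_cat_r addnS.
- have -> : (r + (i + p)).+1 = (r + (i + p).+1)%N by rewrite addnS.
  rewrite !(nth_iota_cat_r (i + p), nth_iota_cat_r (i + p).+1) -!subn1 -addnBA ?eqn_add2l //.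
  exact: leq_ltn_trans (leq0n i) lt_isz.
Qed.

Lemma runs_fact_prod_iota_cat : runs_fact_prod L = (r`! * runs_fact_prod L2)%N.
Proof.
rewrite /runs_fact_prod size_cat size_iota big_split_ord /=; congr (_ * _)%N.
  have lt_r1 : (r.-1 < r + size L2)%N by rewrite prednK // leq_addr.
  rewrite (bigD1 (Ordinal r_gt0)) //= (big_pred1 (Ordinal lt_r1)) => [|p]; last first.
    by rewrite is_full_run_iota_cat_l //= -val_eqE.
  rewrite prednK // big1 ?muln1 // => m ne_m0; rewrite big_pred0 // => p.
  rewrite is_full_run_iota_cat_l //; apply: contraNF ne_m0 => /andP[/eqP m0 _].
  exact/eqP/val_inj.
apply: eq_bigr => i _.
rewrite [RHS](big_ord_widen_cond _ (is_full_run L2 i) (fun p => p.+1`!) (leq_addl r _)).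
apply: eq_bigl => p; rewrite is_full_run_iota_cat_r //.
case: (boolP (is_full_run L2 i p)) => //= /and4P[lt_ipsz _ _ _].
by rewrite (leq_trans _ lt_ipsz) // ltnS leq_addl.
Qed.

End FirstRun.

Lemma sorted_ltn_first_run (L : seq nat) : sorted ltn L -> L != [::] ->
  exists l r L2, [/\ (0 < r)%N, L = iota l r ++ L2, sorted ltn L2
                   & all (fun y => l + r < y)%N L2].
Proof.
elim: L => [//|x L IHL] sorted_xL _; case: L IHL sorted_xL => [|y L] IHL.
  by exists x, 1%N, [::].
move=> /= /andP[lt_xy sorted_yL].
have [l [r [L2 [r_gt0 eq_yL sorted_L2 gap]]]] := IHL sorted_yL isT.
have eq_yl : y = l by move: eq_yL; case: (r) r_gt0 => // ? _ [].
have [eq_y|ne_y] := eqVneq y x.+1.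
  exists x, r.+1, L2; split=> //; first by rewrite eq_yL -eq_yl eq_y.
  by rewrite addnS -addSn -eq_y eq_yl.
have lt_x1y : (x.+1 < y)%N by rewrite ltn_neqAle eq_sym ne_y lt_xy.
exists x, 1%N, (y :: L); split=> //=; rewrite addn1 lt_x1y /=.
apply/allP => z /(allP (order_path_min ltn_trans sorted_yL)) /= lt_yz.
exact: ltn_trans lt_x1y lt_yz.
Qed.

Lemma runs_fact_prod_gt0 L : (0 < runs_fact_prod L)%N.
Proof. by rewrite !prodn_gt0 // => m; rewrite prodn_gt0 // => p; apply: fact_gt0. Qed.

Definition bin_mx (R : pzSemiRingType) n (L : seq nat) : 'M[R]_n :=
  \matrix_(i, j) 'C((nth 0%N L i).+1, nth 0%N L j)%:R.

Lemma det_bin_mx (R : numFieldType) n (L : seq nat) : size L = n -> sorted ltn L ->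
  \det (bin_mx R n L) * (runs_fact_prod L)%:R = \prod_(l <- L) l.+1%:R.
Proof.
elim/ltn_ind: n L => n IHn L size_L sorted_L.
have [L0|L_ne] := eqVneq L [::].
  by move: size_L; rewrite L0 => <-; rewrite det_mx00 big_nil /runs_fact_prod big_ord0 mul1r.
have [l [r [L2 [r_gt0 eqL sorted_L2 gap]]]] := sorted_ltn_first_run sorted_L L_ne.
move: size_L; rewrite eqL size_cat size_iota => size_n; subst n; clear L sorted_L L_ne eqL.
set B := bin_mx R (r + size L2) (iota l r ++ L2).
rewrite -(submxK B) (_ : ursubmx B = 0) ?det_lblock; last first.
  apply/matrixP => i j; rewrite !mxE /= nth_iota_cat_l // nth_iota_cat_r bin_small //.
  by have := gap_nth gap (ltn_ord j); have := ltn_ord i; lia.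
have -> : ulsubmx B = \matrix_(a < r, b < r) 'C(l + a.+1, l + b)%:R.
  by apply/matrixP => i j; rewrite !mxE /= !nth_iota_cat_l // addnS.
have -> : drsubmx B = bin_mx R (size L2) L2.
  by apply/matrixP => i j; rewrite !mxE /= !nth_iota_cat_r.
rewrite runs_fact_prod_iota_cat // natrM big_cat /= -det_bin_run.
by rewrite -(IHn (size L2)) //; [ring | lia].
Qed.

Definition Pmx (k : nat) (L : seq nat) : 'M[{poly rat}]_(size L) :=
  \matrix_(i, j) Ppoly k (nth 0%N L i).+1 (k - nth 0%N L j).

Lemma det_Pmat k n L : \det (Pmat k n L) = (\det (Pmx k L)).[n%:R].
Proof.
rewrite -horner_evalE -det_map_mx; congr (\det _).
by apply/matrixP => i j; rewrite !mxE /= horner_evalE horner_Ppoly.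
Qed.

Lemma sum_nth_ord (L : seq nat) (F : nat -> nat) :
  (\sum_(l <- L) F l = \sum_(i < size L) F (nth 0%N L i))%N.
Proof. by rewrite (big_nth 0%N) big_mkord. Qed.

Lemma size_det_Pmx k L :
  (size (\det (Pmx k L)) <= (\sum_(l <- L) (k - l.+1)).+1)%N.
Proof.
by rewrite sum_nth_ord; apply: size_det_row_bound => i j; rewrite mxE size_Ppoly.
Qed.

Lemma coef_det_Pmx_top k L : sorted ltn L -> all (fun l => l < k)%N L ->
  (\det (Pmx k L))`_(\sum_(l <- L) (k - l.+1)) = (-1) ^+ size L * Cconst k L.
Proof.
move=> sorted_L ltk_L.
have ltk (i : 'I_(size L)) : (nth 0%N L i < k)%N by apply: (allP ltk_L); rewrite mem_nth.
pose F i := (k - (nth 0%N L i).+1)`!%:R : rat.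
pose r : 'rV[rat]_(size L) := \row_i ((-1) ^+ (nth 0%N L i).+1 / F i).
pose c : 'rV[rat]_(size L) := \row_j (-1) ^+ nth 0%N L j.
rewrite sum_nth_ord coef_det_row_bound => [|i j]; last by rewrite mxE size_Ppoly.
have -> : \matrix_(i, j) (Pmx k L i j)`_(k - (nth 0%N L i).+1)
    = diag_mx r *m bin_mx rat (size L) L *m diag_mx c.
  rewrite mul_diag_mx mul_mx_diag; apply/matrixP => i j; rewrite !mxE.
  by rewrite coef_Ppoly_top ?(ltk i) ?(ltnW (ltk j)) // exprD; ring.
have signs : \prod_i r 0 i * \prod_i c 0 i = (-1) ^+ size L / \prod_(l <- L) (k - l.+1)`!%:R.
  rewrite -big_split (big_nth 0%N) big_mkord -prodfV.
  rewrite -[X in (-1) ^+ X](card_ord (size L)) -prodr_const -big_split.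
  by apply: eq_bigr => i _; rewrite !mxE /= mulrAC exprS -(mulrA (-1)) -expr2 sqrr_sign mulr1.
have detB : \det (bin_mx rat (size L) L) = \prod_(l <- L) l.+1%:R / (runs_fact_prod L)%:R.
  by rewrite -(det_bin_mx _ (erefl (size L))) // mulfK // pnatr_eq0 -lt0n runs_fact_prod_gt0.
by rewrite !det_mulmx !det_diag detB mulrAC signs /Cconst invfM; ring.
Qed.

Lemma Pexp_sum k L : all (fun l => l < k)%N L -> Pexp k L = (\sum_(l <- L) (k - l.+1))%N.
Proof.
rewrite /Pexp; elim: L => [|l L IHL] /=; first by rewrite !big_nil.
by move=> /andP[lt_lk /IHL]; rewrite !big_cons /= mulSn; lia.
Qed.

Lemma Cconst_neq0 k L : Cconst k L != 0.
Proof.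
rewrite /Cconst mulf_neq0 ?invr_eq0 ?mulf_neq0 ?pnatr_eq0 -?lt0n ?runs_fact_prod_gt0 //.
  by rewrite prodf_seq_neq0; apply/allP => l _; rewrite pnatr_eq0.
by rewrite prodf_seq_neq0; apply/allP => l _; rewrite natr_fact_neq0.
Qed.

Theorem lemma1 (k : nat) (L : seq nat) :
  (0 < k)%N -> sorted ltn L -> all (fun l => (l < k)%N) L ->
  (exists (M : rat) (N : nat), forall n : nat, (k < n)%N -> (N <= n)%N ->
     `| \det (Pmat k n L)
        - (-1) ^+ size L * Cconst k L * (n%:R : rat) ^ Pexp k L |
     <= M * (n%:R : rat) ^ (Pexp k L - 1))
  /\ (exists N : nat, forall n : nat, (k < n)%N -> (N <= n)%N ->
        Pmat k n L \in unitmx).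
Proof.
move=> _ sorted_L ltk_L.
set D := \det (Pmx k L); set e := (\sum_(l <- L) (k - l.+1))%N.
have approx n : (0 < n)%N ->
    `|\det (Pmat k n L) - (-1) ^+ size L * Cconst k L * n%:R ^ Pexp k L|
    <= (\sum_(i < e) `|D`_i|) * n%:R ^ (Pexp k L - 1).
  move=> n_gt0; rewrite det_Pmat Pexp_sum // -coef_det_Pmx_top //.
  by apply: horner_sub_top_bound; rewrite ?size_det_Pmx ?ler1n.
split; first by exists (\sum_(i < e) `|D`_i|), 0%N => n lt_kn _; apply: approx; lia.
have c_neq0 : (-1) ^+ size L * Cconst k L != 0 by rewrite mulf_neq0 ?signr_eq0 ?Cconst_neq0.
have [N nonzero] := eventually_neq0_of_approx (N := 1) c_neq0 approx.
by exists N => n _ le_Nn; rewrite unitmxE unitfE; apply: nonzero.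
Qed.
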